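(* Assume that for every $t\in\mathcal T$ and every $\underline\pi_t\in\times_{j\in\mathcal N}\mathcal P(\mathcal X^j)$ the fixed-point condition of the backward recursion (see context) has a solution, so that the equilibrium generating function $\theta$ and the value functions $V^i_t$ are well defined, and let $(\beta^*,\mu^* )$ be produced by the forward recursion. Then $(\beta^*,\mu^* )$ is a perfect Bayesian equilibrium. In particular, for every $i\in\mathcal N$, every $t\in\mathcal T$, every public history $a_{1:t-1}\in\mathcal A^{t-1}$, every private history $x^i_{1:t}\in(\mathcal X^i)^t$ and every (general behavioral) strategy $\beta^i$ of player $i$, $$\mathbb E^{\beta^{*,i}_{t:T}\beta^{*,-i}_{t:T},\,\mu^*_t[a_{1:t-1}]}\Big\{\sum_{n=t}^T R^i(X_n,A_n)\,\Big|\,a_{1:t-1},x^i_{1:t}\Big\}\;\ge\;\mathbb E^{\beta^{i}_{t:T}\beta^{*,-i}_{t:T},\,\mu^*_t[a_{1:t-1}]}\Big\{\sum_{n=t}^T R^i(X_n,A_n)\,\Big|\,a_{1:t-1},x^i_{1:t}\Big\}.$$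
   Context: Model: players $\mathcal N=\{1,\dots,N\}$, horizon $\mathcal T=\{1,\dots,T\}$. Player $i$ has a finite type set $\mathcal X^i$ and a finite action set $\mathcal A^i$; $\mathcal X=\times_i\mathcal X^i$, $\mathcal A=\times_i\mathcal A^i$. Types evolve as $P(x_1)=\prod_i Q^i_1(x^i_1)$ and $P(x_{t+1}\mid x_{1:t},a_{1:t})=\prod_i Q^i_{t+1}(x^i_{t+1}\mid x^i_t,a_t)$ for known kernels $Q^i_{t}$ (each kernel may depend on the full action profile $a_t$; $Q^i_{T+1}$ is an arbitrary kernel, irrelevant for rewards). Player $i$ privately observes its own types; all actions are publicly observed, so at time $t$ player $i$ knows $(a_{1:t-1},x^i_{1:t})$. A behavioral strategy of player $i$ gives $\beta^i_t(\cdot\mid a_{1:t-1},x^i_{1:t})\in\mathcal P(\mathcal A^i)$; players randomize independently given their information. Player $i$ receives reward $R^i(x_t,a_t)$ at each time $t$. Notation: $-i$ denotes all players except $i$; $\mathcal P(S)$ is the set of probability distributions on $S$. Belief update: for $\pi^i\in\mathcal P(\mathcal X^i)$, a prescription $\gamma^i:\mathcal X^i\to\mathcal P(\mathcal A^i)$ (written $\gamma^i(a^i|x^i)$), $a\in\mathcal A$ and $t\in\mathcal T$, let $\bar F_t(\pi^i,\gamma^i,a)(y)=\frac{\sum_{x}\pi^i(x)\gamma^i(a^i|x)Q^i_{t+1}(y|x,a)}{\sum_x\pi^i(x)\gamma^i(a^i|x)}$ for $y\in\mathcal X^i$ if the denominator is positive, and $\bar F_t(\pi^i,\gamma^i,a)(y)=\sum_x\pi^i(x)Q^i_{t+1}(y|x,a)$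 otherwise. For $\underline\pi=(\pi^j)_{j}$ and $\gamma=(\gamma^j)_j$, $F_t(\underline\pi,\gamma,a)=(\bar F_t(\pi^j,\gamma^j,a))_{j\in\mathcal N}$. Backward recursion: $V^i_{T+1}\equiv0$. For $t=T,\dots,1$ and each $\underline\pi_t=(\pi^j_t)_j\in\times_j\mathcal P(\mathcal X^j)$, $\theta_t[\underline\pi_t]=\tilde\gamma_t=(\tilde\gamma^j_t)_j$ (each $\tilde\gamma^j_t:\mathcal X^j\to\mathcal P(\mathcal A^j)$) is a solution of the following fixed-point condition: for every $i$ and every $x^i\in\mathcal X^i$, $\tilde\gamma^i_t(\cdot|x^i)$ maximizes over $\gamma^i(\cdot|x^i)\in\mathcal P(\mathcal A^i)$ the quantity $$W^i_t(\gamma^i(\cdot|x^i))=\sum_{x^{-i},a,y}\Big[\prod_{j\ne i}\pi^j_t(x^j)\Big]\gamma^i(a^i|x^i)\Big[\prod_{j\ne i}\tilde\gamma^j_t(a^j|x^j)\Big]Q^i_{t+1}(y|x^i,a)\Big[R^i((x^i,x^{-i}),a)+V^i_{t+1}\big(F_t(\underline\pi_t,\tilde\gamma_t,a),y\big)\Big]$$ (the belief update inside uses $\tilde\gamma_t$, not the maximization variable); $\theta_t$ selects one such solution for each $\underline\pi_t$. Then $V^i_t(\underline\pi_t,x^i)=W^i_t(\tilde\gamma^i_t(\cdot|x^i))$. Forward recursion: $\mu^{*,i}_1[\emptyset]=Q^i_1$. For $t=1,\dots,T$ and every public history: $\underline\mu^*_t[a_{1:t-1}]=(\mu^{*,j}_t[a_{1:t-1}])_j$,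 $\mu^*_t[a_{1:t-1}](x)=\prod_j\mu^{*,j}_t[a_{1:t-1}](x^j)$; $\beta^{*,i}_t(a^i_t\mid a_{1:t-1},x^i_{1:t})=\theta^i_t[\underline\mu^*_t[a_{1:t-1}]](a^i_t\mid x^i_t)$; $\mu^{*,i}_{t+1}[a_{1:t}]=\bar F_t\big(\mu^{*,i}_t[a_{1:t-1}],\theta^i_t[\underline\mu^*_t[a_{1:t-1}]],a_t\big)$. All players use the common belief $\mu^*_t[a_{1:t-1}]$; player $i$'s belief on $x^{-i}_t$ is $\prod_{j\ne i}\mu^{*,j}_t[a_{1:t-1}]$. Conditional expectation notation: for a strategy $\beta^i$ of player $i$, $\mathbb E^{\beta^i_{t:T}\beta^{*,-i}_{t:T},\,\mu^*_t[a_{1:t-1}]}\{\cdot\mid a_{1:t-1},x^i_{1:t}\}$ is the expectation under the process in which $X^i_t=x^i_t$, $X^{-i}_t\sim\prod_{j\ne i}\mu^{*,j}_t[a_{1:t-1}]$, and for $n=t,\dots,T$, given everything realized so far (public history $a_{1:n-1}$ extending the given one, private history $x^i_{1:n}$ extending the given $x^i_{1:t}$), $A^i_n\sim\beta^i_n(\cdot|a_{1:n-1},x^i_{1:n})$ and $A^j_n\sim\beta^{*,j}_n(\cdot|a_{1:n-1},X^j_n)$ independently for $j\ne i$, and $X^j_{n+1}\sim Q^j_{n+1}(\cdot|X^j_n,A_n)$ independently over $j$. *)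

From HB Require Import structures.
From mathcomp Require Import all_boot all_order all_algebra.
Unset Implicit Arguments. Unset Strict Implicit. Unset Printing Implicit Defensive.
Import Order.TTheory GRing.Theory Num.Theory.
Local Open Scope ring_scope.

Definition isDist {R : realFieldType} {S : finType} (p : S -> R) : Prop :=
  (forall s, 0 <= p s) /\ \sum_(s : S) p s = 1.

Section Game.
(* players 'I_N (player k+1 of the paper is index k), horizon T,
   type sets X j, action sets A j, probabilities/rewards valued in R *)
Context {R : realFieldType} {N : nat} {X A : 'I_N -> finType}.

Definition Xprof := {dffun forall j : 'I_N, X j}.
Definition Aprof := {dffun forall j : 'I_N, A j}.

(* Q j t x a y = Q^j_t(y | x, a) (for t >= 2); Q1 j = Q^j_1 *)
Variable Q : forall (j : 'I_N), nat -> X j -> Aprof -> X j -> R.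
Variable Rw : 'I_N -> Xprof -> Aprof -> R.

Definition belief := forall j : 'I_N, X j -> R.
Definition presc := forall j : 'I_N, X j -> A j -> R.

Definition Fbar (t : nat) (j : 'I_N) (pi : X j -> R) (g : X j -> A j -> R)
    (a : Aprof) : X j -> R :=
  fun y =>
    let d := \sum_(x : X j) pi x * g x (a j) in
    if 0 < d then (\sum_(x : X j) pi x * g x (a j) * Q j t.+1 x a y) / d
    else \sum_(x : X j) pi x * Q j t.+1 x a y.

Definition Fvec (t : nat) (pi : belief) (g : presc) (a : Aprof) : belief :=
  fun j => Fbar t j (pi j) (g j) a.

(* W^i_t(gi) given pi_t, the candidate fixed point gt = tilde gamma_t,
   the continuation value V_{t+1} (Vn i pi y = V^i_{t+1}(pi, y)) and x^i. *)
Definition Wfun (t : nat) (Vn : forall i : 'I_N, belief -> X i -> R)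
    (pi : belief) (gt : presc) (i : 'I_N) (xi : X i) (gi : A i -> R) : R :=
  \sum_(x : Xprof | x i == xi) \sum_(a : Aprof) \sum_(y : X i)
    (\prod_(j | j != i) pi j (x j)) * gi (a i)
    * (\prod_(j | j != i) gt j (x j) (a j)) * Q i t.+1 xi a y
    * (Rw i x a + Vn i (Fvec t pi gt a) y).

(* theta / V form a solution of the backward recursion (theta selects, for
   every t in 1..T and every product belief, a solution of the fixed-point
   condition, and V is the resulting value function). *)
Definition backward_recursion (T : nat) (theta : nat -> belief -> presc)
    (V : nat -> forall i : 'I_N, belief -> X i -> R) : Prop :=
  (forall i pi x, V T.+1 i pi x = 0) /\
  (forall t, (1 <= t <= T)%N -> forall pi : belief, (forall j, isDist (pi j)) ->
     [/\ (forall j (x : X j), isDist (theta t pi j x)),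
         (forall i (x : X i) (g : A i -> R), isDist g ->
            Wfun t (V t.+1) pi (theta t pi) i x g
            <= Wfun t (V t.+1) pi (theta t pi) i x (theta t pi i x)) &
         (forall i (x : X i),
            V t i pi x = Wfun t (V t.+1) pi (theta t pi) i x (theta t pi i x))]).

(* forward recursion: mu^*_t[a_{1:t-1}] where t = size ah + 1 *)
Fixpoint mu_from (theta : nat -> belief -> presc) (t : nat) (m : belief)
    (ah : seq Aprof) : belief :=
  match ah with
  | [::] => m
  | a :: ah' => mu_from theta t.+1 (Fvec t m (theta t m) a) ah'
  end.

Definition mustar (Q1 : forall j : 'I_N, X j -> R)
    (theta : nat -> belief -> presc) (ah : seq Aprof) : belief :=
  mu_from theta 1 Q1 ah.

(* A behavioral strategy of player i:
   strat n a_{1:n-1} x^i_{1:n-1} x^i_n a^i = beta^i_n(a^i | a_{1:n-1}, x^i_{1:n}). *)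
Definition strategy (i : 'I_N) := nat -> seq Aprof -> seq (X i) -> X i -> A i -> R.

Definition is_strategy (i : 'I_N) (beta : strategy i) : Prop :=
  forall n ah xp x, isDist (beta n ah xp x).

Definition betastar (Q1 : forall j : 'I_N, X j -> R)
    (theta : nat -> belief -> presc) (i : 'I_N) : strategy i :=
  fun n ah _ x ai => theta n (mustar Q1 theta ah) i x ai.

(* Expected reward to go sum_{m=n}^{n+k-1} R^i(X_m, A_m), with k steps left,
   starting at time n with public history ah = a_{1:n-1}, past private types
   xp = x^i_{1:n-1} of player i and current type profile x = X_n, player i
   using beta and the others using beta^* (which only depends on their
   current type). *)
Fixpoint rtg (Q1 : forall j : 'I_N, X j -> R) (theta : nat -> belief -> presc)
    (i : 'I_N) (beta : strategy i) (k n : nat) (ah : seq Aprof) (xp : seq (X i))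
    (x : Xprof) {struct k} : R :=
  match k with
  | 0 => 0
  | k'.+1 =>
    \sum_(a : Aprof)
      (beta n ah xp (x i) (a i)
       * \prod_(j | j != i) betastar Q1 theta j n ah [::] (x j) (a j))
      * (Rw i x a
         + \sum_(x' : Xprof) (\prod_(j : 'I_N) Q j n.+1 (x j) a (x' j))
             * rtg Q1 theta i beta k' n.+1 (rcons ah a) (rcons xp (x i)) x')
  end.

(* E^{beta^i_{t:T} beta^{*,-i}_{t:T}, mu^*_t[a_{1:t-1}]}
     { sum_{n=t}^T R^i(X_n, A_n) | a_{1:t-1}, x^i_{1:t} }
   with x^i_{1:t} = rcons xp xi. *)
Definition cond_exp (T : nat) (Q1 : forall j : 'I_N, X j -> R)
    (theta : nat -> belief -> presc) (i : 'I_N) (beta : strategy i) (t : nat)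
    (ah : seq Aprof) (xp : seq (X i)) (xi : X i) : R :=
  \sum_(x : Xprof | x i == xi)
    (\prod_(j | j != i) mustar Q1 theta ah j (x j))
    * rtg Q1 theta i beta (T.+1 - t) t ah xp x.

End Game.

(* Backward induction on t.  Conditioned on the public history, the other
   players' types are independent with laws mu^{*,j}_t, and they play the
   prescriptions theta_t; by Bayes' rule the law of their next types given
   a_t is again a product, namely F_t(mu^*_t, theta_t, a_t) = mu^*_{t+1}.
   Hence the reward-to-go of any strategy of player i at time t equals W^i_t
   evaluated at the current randomisation beta^i_t, with V^i_{t+1} replaced by
   the reward-to-go from t+1.  By induction the latter is at most V^i_{t+1},
   with equality for beta^*, and the fixed-point property bounds W^i_t by
   V^i_t, attained at theta^i_t = beta^{*,i}_t. *)
From HB Require Import structures.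
From mathcomp Require Import all_boot all_order all_algebra zify ring.
Import Order.TTheory GRing.Theory Num.Theory.
Local Open Scope ring_scope.

Lemma sum_dffun_prod {R : comNzRingType} {I : finType} {T_ : I -> finType}
    (h : forall i, T_ i -> R) :
  \sum_(x : {dffun forall i, T_ i}) \prod_i h i (x i)
  = \prod_i \sum_(z : T_ i) h i z.
Proof.
have E i : \sum_(z : T_ i) h i z = \sum_(z : T_ i) [ffun z => h i z] z.
  by apply: eq_bigr => z _; rewrite ffunE.
under eq_bigr => i _ do rewrite E (big_tag (fun i => [ffun z => h i z]) i).
rewrite bigA_distr_big_dep -(big_fprod _ _ (fun i => [ffun z => h i z])).
rewrite (reindex (@dffun_of_fprod I T_)); last exact/onW_bij/dffun_of_fprod_bij.
apply: eq_bigr => t _; apply: eq_bigr => i _.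
by rewrite /dffun_of_fprod !ffunE.
Qed.

Lemma sum_dffun_fixed_prod {R : comNzRingType} {I : finType} {T_ : I -> finType}
    {i : I} (xi : T_ i) (k : forall j, T_ j -> R) :
  \sum_(x : {dffun forall j, T_ j} | x i == xi) \prod_(j | j != i) k j (x j)
  = \prod_(j | j != i) \sum_(z : T_ j) k j z.
Proof.
(* Put the indicator of [xi] in coordinate [i] and apply [sum_dffun_prod]. *)
pose h := @dfwith I (fun j => T_ j -> R) k i (fun z => (z == xi)%:R).
have hi z : h i z = (z == xi)%:R by rewrite /h dfwith_in.
have hj j z : j != i -> h j z = k j z by move=> ji; rewrite /h dfwith_out // eq_sym.
have sum_hi : \sum_(z : T_ i) h i z = 1.
  rewrite (bigD1 xi) //= hi eqxx big1 ?addr0 // => z zx.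
  by rewrite hi (negbTE zx).
rewrite [RHS](eq_bigr (fun j => \sum_z h j z)); last first.
  by move=> j ji; apply: eq_bigr => z _; rewrite hj.
have := @sum_dffun_prod R I T_ h; rewrite (bigD1 i) //= sum_hi mul1r => <-.
rewrite big_mkcond /=; apply: eq_bigr => x _.
rewrite [RHS](bigD1 i) //= hi; case: eqP => _; rewrite ?mul1r ?mul0r //.
by apply: eq_bigr => j ji; rewrite hj.
Qed.

Lemma sum_fixed_kernel_step {R : comNzRingType} {I : finType} {T_ : I -> finType}
    {i : I} (xi : T_ i) (h : forall j, T_ j -> R)
    (q : forall j, T_ j -> T_ j -> R) (f : {dffun forall j, T_ j} -> R) :
  \sum_(x : {dffun forall j, T_ j} | x i == xi)
     (\prod_(j | j != i) h j (x j)) *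
     \sum_(x' : {dffun forall j, T_ j}) (\prod_j q j (x j) (x' j)) * f x'
  = \sum_(y : T_ i) q i xi y *
     \sum_(x' : {dffun forall j, T_ j} | x' i == y)
        (\prod_(j | j != i) \sum_z h j z * q j z (x' j)) * f x'.
Proof.
under eq_bigr do rewrite big_distrr /=.
rewrite exchange_big /= (partition_big (fun x' : {dffun forall j, T_ j} => x' i) xpredT) //=.
apply: eq_bigr => y _; rewrite big_distrr /=; apply: eq_bigr => x' /eqP x'y.
rewrite -(sum_dffun_fixed_prod xi (fun j z => h j z * q j z (x' j))).
rewrite big_distrl big_distrr /=; apply: eq_bigr => x /eqP xxi.
rewrite [X in _ * (X * _) = _](bigD1 i) //= xxi x'y big_split /=; ring.
Qed.

Section BayesUpdate.
Variables (R : realFieldType) (N : nat) (X A : 'I_N -> finType).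
Variable Q : forall j : 'I_N, nat -> X j -> @Aprof N A -> X j -> R.
Hypothesis hQ : forall j t (x : X j) (a : @Aprof N A), isDist (Q j t x a).

Lemma isDist_Fbar t j (pi : X j -> R) g a :
  isDist pi -> (forall x, isDist (g x)) -> isDist (Fbar Q t j pi g a).
Proof.
move=> [pi0 pi1] hg; have g0 x b : 0 <= g x b by case: (hg x).
have Q0 x y : 0 <= Q j t.+1 x a y by case: (hQ j t.+1 x a).
have sumQ x : \sum_y Q j t.+1 x a y = 1 by case: (hQ j t.+1 x a).
rewrite /Fbar; case: (boolP (0 < \sum_x pi x * g x (a j))) => dpos; split.
- move=> y; apply: divr_ge0; last exact: ltW.
  by apply: sumr_ge0 => x _; rewrite !mulr_ge0.
- rewrite -big_distrl /= exchange_big /=.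
  under eq_bigr => x _ do rewrite -big_distrr /= sumQ mulr1.
  by rewrite mulfV // lt0r_neq0.
- by move=> y; apply: sumr_ge0 => x _; rewrite mulr_ge0.
- rewrite exchange_big /=.
  by under eq_bigr => x _ do rewrite -big_distrr /= sumQ mulr1.
Qed.

Lemma sum_joint_Fbar t j (pi : X j -> R) (g : X j -> A j -> R)
    (a : @Aprof N A) (w : X j) :
  (forall x, 0 <= pi x) -> (forall x b, 0 <= g x b) ->
  \sum_z pi z * g z (a j) * Q j t.+1 z a w
  = (\sum_z pi z * g z (a j)) * Fbar Q t j pi g a w.
Proof.
move=> pi0 g0; rewrite /Fbar; case: ifP => dpos.
  by rewrite [RHS]mulrC divfK // lt0r_neq0.
have pg0 z : 0 <= pi z * g z (a j) by rewrite mulr_ge0.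
have d0 : \sum_z pi z * g z (a j) = 0.
  by apply/eqP; rewrite eq_le sumr_ge0 // andbT leNgt dpos.
rewrite d0 mul0r big1 // => z _.
by rewrite (psumr_eq0P (fun z _ => pg0 z) d0) ?mul0r.
Qed.

End BayesUpdate.

Section Equilibrium.
Variables (R : realFieldType) (N T : nat) (X A : 'I_N -> finType).
Variables (Q1 : forall j : 'I_N, X j -> R)
  (Q : forall j : 'I_N, nat -> X j -> @Aprof N A -> X j -> R)
  (Rw : 'I_N -> @Xprof N X -> @Aprof N A -> R)
  (theta : nat -> @belief R N X -> @presc R N X A)
  (V : nat -> forall i : 'I_N, @belief R N X -> X i -> R).
Hypothesis hQ1 : forall j, isDist (Q1 j).
Hypothesis hQ : forall j t (x : X j) (a : @Aprof N A), isDist (Q j t x a).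
Hypothesis hBR : backward_recursion Q Rw T theta V.

Let Xp := @Xprof N X.
Let Ap := @Aprof N A.
Let bel := @belief R N X.

Lemma mu_from_rcons t m ah a :
  mu_from Q theta t m (rcons ah a) =
  Fvec Q (t + size ah) (mu_from Q theta t m ah)
       (theta (t + size ah) (mu_from Q theta t m ah)) a.
Proof.
elim: ah t m => [|b ah IH] t m /=; first by rewrite addn0.
by rewrite IH addSnnS.
Qed.

Lemma mustar_rcons n ah a : (1 <= n)%N -> size ah = n.-1 ->
  mustar Q Q1 theta (rcons ah a)
  = Fvec Q n (mustar Q Q1 theta ah) (theta n (mustar Q Q1 theta ah)) a.
Proof. by move=> n1 sah; rewrite /mustar mu_from_rcons sah add1n (prednK n1). Qed.

Lemma isDist_mu_from ah t m : (1 <= t)%N -> (t + size ah <= T.+1)%N ->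
  (forall j, isDist (m j)) -> forall j, isDist (mu_from Q theta t m ah j).
Proof.
elim: ah t m => [|a ah IH] t m //= t1 tT hm.
apply: IH => //; first by rewrite addSnnS.
move=> j; apply: isDist_Fbar => //.
have tT' : (1 <= t <= T)%N by apply/andP; split => //; lia.
by have [] := hBR.2 t tT' m hm.
Qed.

Lemma isDist_mustar ah j : (size ah <= T)%N -> isDist (mustar Q Q1 theta ah j).
Proof. by move=> sT; apply: isDist_mu_from => //; exact: hQ1. Qed.

(* [E[R^i(X_n, a); A^{-i}_n = a^{-i} | X^i_n = xi]] when the others' types
   follow [mu] and they play [theta n mu]. *)
Definition joint_reward i (xi : X i) n (mu : bel) (a : Ap) : R :=
  \sum_(x : Xp | x i == xi)
     (\prod_(j | j != i) (mu j (x j) * theta n mu j (x j) (a j))) * Rw i x a.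

Definition others_action_prob i n (mu : bel) (a : Ap) : R :=
  \prod_(j | j != i) \sum_z mu j z * theta n mu j z (a j).

(* One step of the Bellman operator of player [i] against [theta n mu], with
   own randomisation [g] and continuation value [cont a y] after action
   profile [a] and own next type [y]. *)
Definition step_value i (xi : X i) n (mu : bel) (g : A i -> R)
    (cont : Ap -> X i -> R) : R :=
  \sum_(a : Ap) g (a i) *
    (joint_reward i xi n mu a
     + others_action_prob i n mu a * \sum_y Q i n.+1 xi a y * cont a y).

Lemma step_value_le i xi n (mu : bel) g cont1 cont2 :
  (forall j z, 0 <= mu j z) -> (forall j z b, 0 <= theta n mu j z b) ->
  (forall b, 0 <= g b) -> (forall a y, cont1 a y <= cont2 a y) ->
  step_value i xi n mu g cont1 <= step_value i xi n mu g cont2.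
Proof.
move=> mu0 th0 g0 le12; apply: ler_sum => a _.
rewrite ler_wpM2l // lerD2l ler_wpM2l //.
  by apply: prodr_ge0 => j _; apply: sumr_ge0 => z _; rewrite mulr_ge0.
apply: ler_sum => y _; rewrite ler_wpM2l //.
by case: (hQ i n.+1 xi a).
Qed.

Lemma eq_step_value i xi n (mu : bel) g cont1 cont2 :
  (forall a y, cont1 a y = cont2 a y) ->
  step_value i xi n mu g cont1 = step_value i xi n mu g cont2.
Proof.
move=> e12; apply: eq_bigr => a _.
by under eq_bigr => y _ do rewrite e12.
Qed.

Lemma Wfun_step_value i xi n (mu : bel) g :
  Wfun Q Rw n (V n.+1) mu (theta n mu) i xi g
  = step_value i xi n mu g
      (fun a y => V n.+1 i (Fvec Q n mu (theta n mu) a) y).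
Proof.
rewrite /Wfun exchange_big /=; apply: eq_bigr => a _.
rewrite /others_action_prob.
rewrite -(sum_dffun_fixed_prod xi (fun j z => mu j z * theta n mu j z (a j))).
rewrite /joint_reward big_distrl -big_split big_distrr /=; apply: eq_bigr => x _.
rewrite big_split /=.
set M := \prod_(j | j != i) mu j (x j).
set M' := \prod_(j | j != i) theta n mu j (x j) (a j).
set v := V n.+1 i (Fvec Q n mu (theta n mu) a).
have sumQ : \sum_y Q i n.+1 xi a y = 1 by case: (hQ i n.+1 xi a).
transitivity (\sum_y (g (a i) * (M * M') * Rw i x a * Q i n.+1 xi a y
                      + g (a i) * (M * M') * (Q i n.+1 xi a y * v y))).
  by apply: eq_bigr => y _; ring.
by rewrite big_split -!big_distrr /= sumQ; ring.
Qed.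

Lemma cond_exp_step_value i beta n ah xp xi :
  (1 <= n <= T)%N -> size ah = n.-1 ->
  (forall j z, 0 <= mustar Q Q1 theta ah j z) ->
  (forall j z b, 0 <= theta n (mustar Q Q1 theta ah) j z b) ->
  cond_exp Q Rw T Q1 theta i beta n ah xp xi
  = step_value i xi n (mustar Q Q1 theta ah) (beta n ah xp xi)
      (fun a y => cond_exp Q Rw T Q1 theta i beta n.+1 (rcons ah a) (rcons xp xi) y).
Proof.
move=> /andP[n1 nT] sah mu0 th0.
rewrite /cond_exp /step_value subSn // subSS /=.
under [RHS]eq_bigr => a _ do rewrite (mustar_rcons _ _ _ n1 sah).
set mu := mustar Q Q1 theta ah.
under [LHS]eq_bigr => x /eqP xxi do rewrite xxi big_distrr.
rewrite exchange_big /=; apply: eq_bigr => a _.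
set f := fun x' => rtg Q Rw Q1 theta i beta (T - n) n.+1 (rcons ah a) (rcons xp xi) x'.
have cont_step : others_action_prob i n mu a * \sum_y Q i n.+1 xi a y *
    \sum_(x' : Xp | x' i == y)
        \prod_(j | j != i) Fvec Q n mu (theta n mu) a j (x' j) * f x'
  = \sum_(x : Xp | x i == xi)
      (\prod_(j | j != i) (mu j (x j) * theta n mu j (x j) (a j))) *
      \sum_(x' : Xp) (\prod_j Q j n.+1 (x j) a (x' j)) * f x'.
  rewrite (sum_fixed_kernel_step xi (fun j z => mu j z * theta n mu j z (a j))
             (fun j z w => Q j n.+1 z a w) f).
  rewrite big_distrr; apply: eq_bigr => y _ /=.
  rewrite mulrCA; congr (_ * _).
  rewrite big_distrr; apply: eq_bigr => x' _ /=.
  rewrite mulrA; congr (_ * _).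
  rewrite /others_action_prob -big_split /=; apply: eq_bigr => j _.
  by rewrite /Fvec sum_joint_Fbar.
rewrite cont_step /joint_reward -big_split big_distrr /=; apply: eq_bigr => x _.
rewrite big_split /= /betastar -/mu; ring.
Qed.

Lemma cond_exp_value i n k ah xp xi :
  (1 <= n)%N -> (n + k = T.+1)%N -> size ah = n.-1 ->
  (forall beta, is_strategy i beta ->
     cond_exp Q Rw T Q1 theta i beta n ah xp xi <= V n i (mustar Q Q1 theta ah) xi)
  /\ cond_exp Q Rw T Q1 theta i (betastar Q Q1 theta i) n ah xp xi
     = V n i (mustar Q Q1 theta ah) xi.
Proof.
elim: k n ah xp xi => [|k IH] n ah xp xi n1 nk sah.
  rewrite addn0 in nk; subst n.
  have cond_exp0 beta : cond_exp Q Rw T Q1 theta i beta T.+1 ah xp xi = 0.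
    by rewrite /cond_exp subnn big1 // => x _; rewrite mulr0.
  by rewrite hBR.1 !cond_exp0; split => // beta _; rewrite cond_exp0.
have nT : (1 <= n <= T)%N by apply/andP; split => //; lia.
set mu := mustar Q Q1 theta ah.
have hmu j : isDist (mu j) by apply: isDist_mustar; rewrite sah; lia.
have mu0 j z : 0 <= mu j z by case: (hmu j).
have [hth hmax hV] := hBR.2 n nT mu hmu.
have th0 j z b : 0 <= theta n mu j z b by case: (hth j z).
have nk' : (n.+1 + k = T.+1)%N by rewrite -nk addSnnS.
have sah' a : size (rcons ah a) = n by rewrite size_rcons sah prednK.
have IHn a y := IH n.+1 (rcons ah a) (rcons xp xi) y isT nk' (sah' a).
have mu_next a : mustar Q Q1 theta (rcons ah a) = Fvec Q n mu (theta n mu) a.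
  exact: mustar_rcons.
split.
  move=> beta hb; have [beta0 _] := hb n ah xp xi.
  rewrite cond_exp_step_value // hV -/mu.
  apply: le_trans (hmax i xi _ (hb n ah xp xi)).
  rewrite Wfun_step_value; apply: step_value_le => // a y.
  by rewrite -mu_next; apply: (IHn a y).1.
rewrite cond_exp_step_value // hV Wfun_step_value; apply: eq_step_value => a y.
by rewrite (IHn a y).2 mu_next.
Qed.

End Equilibrium.

Arguments cond_exp_value {R N T X A Q1 Q Rw theta V} hQ1 hQ hBR i {n k ah} xp xi.

Theorem theorem1 (R : realFieldType) (N T : nat) (X A : 'I_N -> finType)
  (Q1 : forall j : 'I_N, X j -> R)
  (Q : forall j : 'I_N, nat -> X j -> @Aprof N A -> X j -> R)
  (Rw : 'I_N -> @Xprof N X -> @Aprof N A -> R)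
  (hQ1 : forall j, isDist (Q1 j))
  (hQ : forall j t (x : X j) (a : @Aprof N A), isDist (Q j t x a))
  (theta : nat -> @belief R N X -> @presc R N X A)
  (V : nat -> forall i : 'I_N, @belief R N X -> X i -> R)
  (hBR : backward_recursion Q Rw T theta V) :
  forall (i : 'I_N) (t : nat), (1 <= t <= T)%N ->
  forall (ah : seq (@Aprof N A)), size ah = t.-1 ->
  forall (xp : seq (X i)) (xi : X i), size xp = t.-1 ->
  forall beta : @strategy R N X A i, is_strategy i beta ->
    cond_exp Q Rw T Q1 theta i beta t ah xp xi
    <= cond_exp Q Rw T Q1 theta i (betastar Q Q1 theta i) t ah xp xi.
Proof.
move=> i t /andP[t1 tT] ah sah xp xi _ beta hbeta.
have tk : (t + (T.+1 - t))%N = T.+1 by lia.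
have [le_V eq_V] := cond_exp_value hQ1 hQ hBR i xp xi t1 tk sah.
by rewrite eq_V; apply: le_V.
Qed.
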